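(* Let $(X,d)$ be a geodesic space such that $\operatorname{Curv}_{loc}X\le 0$ and such that for every triangle $(a_1,a_2,a_3)$ in $X$ the circumradius is attained, i.e. there is $m\in X$ with $\max_i d(m,a_i)=r(a_1,a_2,a_3)$. If $(X,d)$ is a Busemann space, then $\operatorname{Curv} X\leq 0$.
   Context: A geodesic space is a metric space in which any two points $x,y$ are joined by a geodesic, i.e. a path $\gamma\colon[0,1]\to X$ with $\gamma(0)=x,\gamma(1)=y$ and $d(\gamma(s),\gamma(t))=d(x,y)|s-t|$. A geodesic space is Busemann if for all geodesics $\gamma,\eta\colon[0,1]\to X$ the function $t\mapsto d(\gamma(t),\eta(t))$ is convex. A triangle is a triple $(a_1,a_2,a_3)$ of points of $X$; a comparison triangle is a triple $(\bar a_1,\bar a_2,\bar a_3)$ in $\mathbb{R}^2$ with $\|\bar a_i-\bar a_j\|=d(a_i,a_j)$. The circumradius is $r(a_1,a_2,a_3)=\inf_{x\in X}\max_i d(x,a_i)$, and $r(\bar a_1,\bar a_2,\bar a_3)=\min_{x\in\mathbb{R}^2}\max_i\|x-\bar a_i\|$. $\operatorname{Curv}X\le0$ means $r(a_1,a_2,a_3)\le r(\bar a_1,\bar a_2,\bar a_3)$ for every triangle in $X$. $\operatorname{Curv}_{loc}X\le0$ means that every $x\in X$ has a neighborhood $U$ such that this inequality holds for all triangles with vertices in $U$. *)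

From Stdlib Require Import Reals.
From Coquelicot Require Import Coquelicot.
Open Scope R_scope.

Section Defs.
Context {T : Type} (d : T -> T -> R).

Definition is_metric : Prop :=
  (forall x y, 0 <= d x y) /\
  (forall x y, d x y = 0 <-> x = y) /\
  (forall x y, d x y = d y x) /\
  (forall x y z, d x z <= d x y + d y z).

Definition geodesic (x y : T) (g : R -> T) : Prop :=
  g 0 = x /\ g 1 = y /\
  forall s t, 0 <= s <= 1 -> 0 <= t <= 1 ->
    d (g s) (g t) = d x y * Rabs (s - t).

Definition geodesic_space : Prop :=
  forall x y, exists g, geodesic x y g.

Definition busemann : Prop :=
  forall x y x' y' (g h : R -> T), geodesic x y g -> geodesic x' y' h ->
    forall s t l, 0 <= s <= 1 -> 0 <= t <= 1 -> 0 <= l <= 1 ->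
      d (g ((1 - l) * s + l * t)) (h ((1 - l) * s + l * t))
        <= (1 - l) * d (g s) (h s) + l * d (g t) (h t).

Definition max3 (u v w : R) : R := Rmax (Rmax u v) w.

Definition circumradius (a1 a2 a3 : T) : R :=
  real (Glb_Rbar (fun r => exists x, r = max3 (d x a1) (d x a2) (d x a3))).

Definition ball (x : T) (e : R) : T -> Prop := fun y => d x y < e.
End Defs.

Definition eucl (p q : R * R) : R :=
  sqrt ((fst p - fst q) ^ 2 + (snd p - snd q) ^ 2).

(** circumradius in R^2: min_{x in R^2} max_i ||x - b_i|| (as infimum; it is attained) *)
Definition circumradius_R2 (b1 b2 b3 : R * R) : R := circumradius eucl b1 b2 b3.

Definition comparison_triangle {T : Type} (d : T -> T -> R) (a1 a2 a3 : T)
  (b1 b2 b3 : R * R) : Prop :=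
  eucl b1 b2 = d a1 a2 /\ eucl b1 b3 = d a1 a3 /\ eucl b2 b3 = d a2 a3.

Definition CAT0_triangle {T : Type} (d : T -> T -> R) (a1 a2 a3 : T) : Prop :=
  forall b1 b2 b3, comparison_triangle d a1 a2 a3 b1 b2 b3 ->
    circumradius d a1 a2 a3 <= circumradius_R2 b1 b2 b3.

Definition curv_nonpos {T : Type} (d : T -> T -> R) : Prop :=
  forall a1 a2 a3, CAT0_triangle d a1 a2 a3.

Definition curv_loc_nonpos {T : Type} (d : T -> T -> R) : Prop :=
  forall x, exists U : T -> Prop,
    (exists e, 0 < e /\ forall y, ball d x e y -> U y) /\
    forall a1 a2 a3, U a1 -> U a2 -> U a3 -> CAT0_triangle d a1 a2 a3.

Definition circumradius_attained {T : Type} (d : T -> T -> R) : Prop :=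
  forall a1 a2 a3, exists m, max3 (d m a1) (d m a2) (d m a3) = circumradius d a1 a2 a3.

(** Let m be a circumcenter of the triangle (a1, a2, a3), with radius r, and
    shrink the triangle towards m: p_i is the point at fraction t of the
    geodesic from m to a_i. For small t the p_i lie in a neighbourhood of m
    where the comparison inequality holds. The Busemann condition gives
    d(p_i, p_j) <= t d(a_i, a_j), and since d(p_i, a_i) <= (1 - t) r the
    circumradius of the p_i is at least t r. In the plane, the circumradius of
    a triangle is monotone in its side lengths (the circumcenter is a convex
    combination of the vertices, and its squared distance to them is bounded
    by a weighted variance that is monotone in the squared sides), so the
    comparison triangle of the p_i has circumradius at most t times that of
    the comparison triangle of the a_i. Dividing by t gives the claim. *)

From Stdlib Require Import Reals Lra Psatz.
From Coquelicot Require Import Coquelicot.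
Open Scope R_scope.

Lemma max3_l u v w : u <= max3 u v w.
Proof. unfold max3; eapply Rle_trans; [apply Rmax_l | apply Rmax_l]. Qed.

Lemma max3_m u v w : v <= max3 u v w.
Proof. unfold max3; eapply Rle_trans; [apply Rmax_r | apply Rmax_l]. Qed.

Lemma max3_r u v w : w <= max3 u v w.
Proof. unfold max3; apply Rmax_r. Qed.

Lemma max3_lub u v w z : u <= z -> v <= z -> w <= z -> max3 u v w <= z.
Proof. intros; unfold max3; repeat apply Rmax_lub; assumption. Qed.

Section Infimum.
Context {U : Type} (f : U -> R).

(* [real] sends [m_infty] to 0, hence the nonnegativity hypothesis. *)
Lemma Glb_image_le x :
  (forall y, 0 <= f y) -> real (Glb_Rbar (fun r => exists y, r = f y)) <= f x.
Proof.
  intros f_ge0.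
  destruct (Glb_Rbar_correct (fun r => exists y, r = f y)) as [lb _].
  specialize (lb (f x) (ex_intro _ x eq_refl)).
  destruct (Glb_Rbar _); simpl in *; [exact lb | contradiction | apply f_ge0].
Qed.

Lemma Glb_image_ge (x0 : U) rho :
  (forall y, rho <= f y) -> rho <= real (Glb_Rbar (fun r => exists y, r = f y)).
Proof.
  intros rho_lb.
  destruct (Glb_Rbar_correct (fun r => exists y, r = f y)) as [lb glb].
  assert (lb_rho : Rbar_le rho (Glb_Rbar (fun r => exists y, r = f y))).
  { apply glb; intros r [y ->]; apply rho_lb. }
  specialize (lb (f x0) (ex_intro _ x0 eq_refl)).
  destruct (Glb_Rbar _); simpl in *; [exact lb_rho | contradiction | contradiction].
Qed.

End Infimum.

Section Circumradius.
Context {T : Type} (d : T -> T -> R).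
Hypothesis d_ge0 : forall x y, 0 <= d x y.

Lemma circumradius_le_max3 a1 a2 a3 x :
  circumradius d a1 a2 a3 <= max3 (d x a1) (d x a2) (d x a3).
Proof.
  apply (Glb_image_le (fun y => max3 (d y a1) (d y a2) (d y a3))).
  intros y; eapply Rle_trans; [apply d_ge0 | apply max3_l].
Qed.

Lemma circumradius_ge a1 a2 a3 rho :
  (forall x, rho <= max3 (d x a1) (d x a2) (d x a3)) ->
  rho <= circumradius d a1 a2 a3.
Proof. apply (Glb_image_ge _ a1). Qed.

Lemma circumradius_le_add (tri : forall x y z, d x z <= d x y + d y z)
    a1 a2 a3 p1 p2 p3 s :
  d p1 a1 <= s -> d p2 a2 <= s -> d p3 a3 <= s ->
  circumradius d a1 a2 a3 <= circumradius d p1 p2 p3 + s.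
Proof.
  intros h1 h2 h3.
  enough (circumradius d a1 a2 a3 - s <= circumradius d p1 p2 p3) by lra.
  apply circumradius_ge; intros x.
  enough (max3 (d x a1) (d x a2) (d x a3) <= max3 (d x p1) (d x p2) (d x p3) + s)
    by (pose proof (circumradius_le_max3 a1 a2 a3 x); lra).
  pose proof (max3_l (d x p1) (d x p2) (d x p3)).
  pose proof (max3_m (d x p1) (d x p2) (d x p3)).
  pose proof (max3_r (d x p1) (d x p2) (d x p3)).
  apply max3_lub;
    [pose proof (tri x p1 a1) | pose proof (tri x p2 a2) | pose proof (tri x p3 a3)]; lra.
Qed.

End Circumradius.

Definition sq (p q : R * R) : R := (fst p - fst q) ^ 2 + (snd p - snd q) ^ 2.

Lemma sq_ge0 p q : 0 <= sq p q.
Proof. unfold sq; apply Rplus_le_le_0_compat; apply pow2_ge_0. Qed.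

Lemma eucl_ge0 p q : 0 <= eucl p q.
Proof. apply sqrt_pos. Qed.

Lemma eucl_sq p q : eucl p q ^ 2 = sq p q.
Proof. apply pow2_sqrt, sq_ge0. Qed.

Lemma sq_le_eucl p q M : eucl p q <= M -> sq p q <= M ^ 2.
Proof. intros h; rewrite <- eucl_sq; apply pow_incr; split; [apply eucl_ge0 | exact h]. Qed.

Lemma eucl_le_sq p q M : 0 <= M -> sq p q <= M ^ 2 -> eucl p q <= M.
Proof. intros hM h; rewrite <- (sqrt_pow2 M hM); apply sqrt_le_1_alt, h. Qed.

Definition bary (m1 m2 m3 : R) (c1 c2 c3 : R * R) : R * R :=
  (m1 * fst c1 + m2 * fst c2 + m3 * fst c3, m1 * snd c1 + m2 * snd c2 + m3 * snd c3).

Definition weighted_variance (m1 m2 m3 : R) (c1 c2 c3 : R * R) : R :=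
  m1 * m2 * sq c1 c2 + m1 * m3 * sq c1 c3 + m2 * m3 * sq c2 c3.

Definition convex_weights (m1 m2 m3 : R) : Prop :=
  0 <= m1 /\ 0 <= m2 /\ 0 <= m3 /\ m1 + m2 + m3 = 1.

Lemma sq_bary c1 c2 c3 m1 m2 m3 : m1 + m2 + m3 = 1 ->
  let p := bary m1 m2 m3 c1 c2 c3 in
  let W := weighted_variance m1 m2 m3 c1 c2 c3 in
  sq p c1 = m2 * sq c1 c2 + m3 * sq c1 c3 - W /\
  sq p c2 = m1 * sq c1 c2 + m3 * sq c2 c3 - W /\
  sq p c3 = m1 * sq c1 c3 + m2 * sq c2 c3 - W.
Proof.
  intros hs; destruct c1, c2, c3; unfold weighted_variance, bary, sq; simpl.
  replace m3 with (1 - m1 - m2) by lra; repeat split; ring.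
Qed.

(* Outside the obtuse case these are the barycentric coordinates a^2(b^2+c^2-a^2)
   of the circumcenter, for which all three inequalities are equalities; in the
   obtuse case the midpoint of the longest side does the job. *)
Lemma circumcenter_weights A B C : 0 <= A -> 0 <= B -> 0 <= C ->
  exists m1 m2 m3, convex_weights m1 m2 m3 /\
    let W := m1 * m2 * C + m1 * m3 * B + m2 * m3 * A in
    m2 * C + m3 * B <= 2 * W /\ m1 * C + m3 * A <= 2 * W /\ m1 * B + m2 * A <= 2 * W.
Proof.
  intros hA hB hC; unfold convex_weights.
  destruct (Rle_lt_dec (B + C) A).
  { exists 0, (1/2), (1/2); simpl; repeat split; lra. }
  destruct (Rle_lt_dec (A + C) B).
  { exists (1/2), 0, (1/2); simpl; repeat split; lra. }
  destruct (Rle_lt_dec (A + B) C).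
  { exists (1/2), (1/2), 0; simpl; repeat split; lra. }
  set (n1 := A * (B + C - A)); set (n2 := B * (A + C - B)); set (n3 := C * (A + B - C)).
  assert (0 < n1) by (apply Rmult_lt_0_compat; lra).
  assert (0 < n2) by (apply Rmult_lt_0_compat; lra).
  assert (0 < n3) by (apply Rmult_lt_0_compat; lra).
  set (S := n1 + n2 + n3); assert (0 < S) by (unfold S; lra).
  exists (n1 / S), (n2 / S), (n3 / S); unfold S, n1, n2, n3 in *;
    repeat split; try (apply Rlt_le, Rdiv_lt_0_compat; lra);
    try apply Req_le; field; lra.
Qed.

Lemma exists_bary_center c1 c2 c3 : exists m1 m2 m3, convex_weights m1 m2 m3 /\
  let p := bary m1 m2 m3 c1 c2 c3 in
  let W := weighted_variance m1 m2 m3 c1 c2 c3 in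
  sq p c1 <= W /\ sq p c2 <= W /\ sq p c3 <= W.
Proof.
  destruct (circumcenter_weights (sq c2 c3) (sq c1 c3) (sq c1 c2))
    as (m1 & m2 & m3 & hm & k1 & k2 & k3); try apply sq_ge0.
  exists m1, m2, m3; split; [exact hm |].
  destruct hm as (_ & _ & _ & hs).
  pose proof (sq_bary c1 c2 c3 m1 m2 m3 hs) as E; cbv zeta in E |- *.
  destruct E as (-> & -> & ->); unfold weighted_variance; repeat split; lra.
Qed.

(* The defect is the squared distance from [q] to the barycenter. *)
Lemma weighted_variance_le b1 b2 b3 q m1 m2 m3 : convex_weights m1 m2 m3 ->
  weighted_variance m1 m2 m3 b1 b2 b3 <= m1 * sq q b1 + m2 * sq q b2 + m3 * sq q b3.
Proof.
  intros (_ & _ & _ & hs); destruct b1 as [x1 y1], b2 as [x2 y2], b3 as [x3 y3], q as [u v].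
  unfold weighted_variance, sq; simpl.
  replace m3 with (1 - m1 - m2) by lra.
  set (px := m1 * x1 + m2 * x2 + (1 - m1 - m2) * x3).
  set (py := m1 * y1 + m2 * y2 + (1 - m1 - m2) * y3).
  pose proof (pow2_ge_0 (u - px)); pose proof (pow2_ge_0 (v - py)).
  enough (E : m1 * ((u - x1) ^ 2 + (v - y1) ^ 2) + m2 * ((u - x2) ^ 2 + (v - y2) ^ 2)
    + (1 - m1 - m2) * ((u - x3) ^ 2 + (v - y3) ^ 2)
    - (m1 * m2 * ((x1 - x2) ^ 2 + (y1 - y2) ^ 2)
       + m1 * (1 - m1 - m2) * ((x1 - x3) ^ 2 + (y1 - y3) ^ 2)
       + m2 * (1 - m1 - m2) * ((x2 - x3) ^ 2 + (y2 - y3) ^ 2))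
    = (u - px) ^ 2 + (v - py) ^ 2) by lra.
  unfold px, py; ring.
Qed.

Lemma weighted_variance_le_circumradius_R2 b1 b2 b3 m1 m2 m3 : convex_weights m1 m2 m3 ->
  weighted_variance m1 m2 m3 b1 b2 b3 <= circumradius_R2 b1 b2 b3 ^ 2.
Proof.
  intros hm.
  assert (W_le : forall q, weighted_variance m1 m2 m3 b1 b2 b3
                             <= max3 (eucl q b1) (eucl q b2) (eucl q b3) ^ 2).
  { intros q; pose proof (weighted_variance_le b1 b2 b3 q m1 m2 m3 hm).
    pose proof (sq_le_eucl _ _ _ (max3_l (eucl q b1) (eucl q b2) (eucl q b3))).
    pose proof (sq_le_eucl _ _ _ (max3_m (eucl q b1) (eucl q b2) (eucl q b3))).
    pose proof (sq_le_eucl _ _ _ (max3_r (eucl q b1) (eucl q b2) (eucl q b3))).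
    destruct hm as (? & ? & ? & ?); nra. }
  set (W := weighted_variance m1 m2 m3 b1 b2 b3) in *.
  assert (W_ge0 : 0 <= W).
  { destruct hm as (? & ? & ? & _); unfold W, weighted_variance.
    pose proof (sq_ge0 b1 b2); pose proof (sq_ge0 b1 b3); pose proof (sq_ge0 b2 b3).
    assert (0 <= m1 * m2) by nra; assert (0 <= m1 * m3) by nra; assert (0 <= m2 * m3) by nra.
    nra. }
  assert (sqrt W <= circumradius_R2 b1 b2 b3).
  { apply circumradius_ge; intros q.
    rewrite <- (sqrt_pow2 (max3 _ _ _)).
    - apply sqrt_le_1_alt, W_le.
    - eapply Rle_trans; [apply eucl_ge0 | apply max3_l]. }
  rewrite <- (pow2_sqrt W W_ge0); apply pow_incr; split; [apply sqrt_pos | assumption].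
Qed.

Lemma weighted_variance_scale b1 b2 b3 c1 c2 c3 m1 m2 m3 t :
  convex_weights m1 m2 m3 -> 0 <= t ->
  eucl c1 c2 <= t * eucl b1 b2 -> eucl c1 c3 <= t * eucl b1 b3 ->
  eucl c2 c3 <= t * eucl b2 b3 ->
  weighted_variance m1 m2 m3 c1 c2 c3 <= t ^ 2 * weighted_variance m1 m2 m3 b1 b2 b3.
Proof.
  intros (? & ? & ? & _) ht h12 h13 h23.
  apply sq_le_eucl in h12, h13, h23; rewrite Rpow_mult_distr, !eucl_sq in h12, h13, h23.
  unfold weighted_variance.
  assert (0 <= m1 * m2) by nra; assert (0 <= m1 * m3) by nra; assert (0 <= m2 * m3) by nra.
  nra.
Qed.

Lemma circumradius_R2_scale b1 b2 b3 c1 c2 c3 t : 0 <= t ->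
  eucl c1 c2 <= t * eucl b1 b2 -> eucl c1 c3 <= t * eucl b1 b3 ->
  eucl c2 c3 <= t * eucl b2 b3 ->
  circumradius_R2 c1 c2 c3 <= t * circumradius_R2 b1 b2 b3.
Proof.
  intros ht h12 h13 h23.
  destruct (exists_bary_center c1 c2 c3) as (m1 & m2 & m3 & hm & k1 & k2 & k3).
  set (p := bary m1 m2 m3 c1 c2 c3) in *.
  assert (rb_ge0 : 0 <= circumradius_R2 b1 b2 b3)
    by (apply (circumradius_ge eucl); intros x; eapply Rle_trans; [apply eucl_ge0 | apply max3_l]).
  assert (W_le : weighted_variance m1 m2 m3 c1 c2 c3 <= (t * circumradius_R2 b1 b2 b3) ^ 2).
  { rewrite Rpow_mult_distr.
    eapply Rle_trans; [apply (weighted_variance_scale b1 b2 b3 c1 c2 c3 m1 m2 m3 t); assumption |].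
    apply Rmult_le_compat_l; [nra | apply weighted_variance_le_circumradius_R2, hm]. }
  eapply Rle_trans; [apply (circumradius_le_max3 eucl eucl_ge0 c1 c2 c3 p) |].
  assert (0 <= t * circumradius_R2 b1 b2 b3) by nra.
  apply max3_lub; apply eucl_le_sq; lra.
Qed.

Lemma eucl_triangle_exists l12 l13 l23 : 0 <= l12 -> 0 <= l13 -> 0 <= l23 ->
  l23 <= l12 + l13 -> l12 <= l13 + l23 -> l13 <= l12 + l23 ->
  exists c1 c2 c3, eucl c1 c2 = l12 /\ eucl c1 c3 = l13 /\ eucl c2 c3 = l23.
Proof.
  intros h12 h13 h23 t1 t2 t3.
  destruct (Req_dec l12 0) as [z | nz].
  { assert (l23 = l13) by lra; subst.
    exists (0, 0), (0, 0), (l13, 0); unfold eucl; cbn [fst snd]; repeat split.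
    - replace ((0 - 0) ^ 2 + (0 - 0) ^ 2) with (0 ^ 2) by ring; apply sqrt_pow2; lra.
    - replace ((0 - l13) ^ 2 + (0 - 0) ^ 2) with (l13 ^ 2) by ring; apply sqrt_pow2; lra.
    - replace ((0 - l13) ^ 2 + (0 - 0) ^ 2) with (l13 ^ 2) by ring; apply sqrt_pow2; lra. }
  set (x := (l12 ^ 2 + l13 ^ 2 - l23 ^ 2) / (2 * l12)).
  assert (hx : 2 * l12 * x = l12 ^ 2 + l13 ^ 2 - l23 ^ 2) by (unfold x; field; lra).
  assert (x ^ 2 <= l13 ^ 2).
  { enough (- l13 <= x <= l13) by nra.
    split; apply (Rmult_le_reg_l (2 * l12)); try lra; rewrite hx; nra. }
  set (y := sqrt (l13 ^ 2 - x ^ 2)).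
  assert (y2 : y ^ 2 = l13 ^ 2 - x ^ 2) by (apply pow2_sqrt; lra).
  exists (0, 0), (l12, 0), (x, y); unfold eucl; cbn [fst snd]; repeat split.
  - replace ((0 - l12) ^ 2 + (0 - 0) ^ 2) with (l12 ^ 2) by ring; apply sqrt_pow2; lra.
  - replace ((0 - x) ^ 2 + (0 - y) ^ 2) with (l13 ^ 2) by nra; apply sqrt_pow2; lra.
  - replace ((l12 - x) ^ 2 + (0 - y) ^ 2) with (l23 ^ 2) by nra; apply sqrt_pow2; lra.
Qed.

Section MetricSpace.
Context {T : Type} (d : T -> T -> R).
Hypothesis metric : is_metric d.

Lemma comparison_triangle_exists a1 a2 a3 :
  exists b1 b2 b3, comparison_triangle d a1 a2 a3 b1 b2 b3.
Proof.
  destruct metric as (d_ge0 & _ & sym & tri).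
  pose proof (tri a2 a1 a3); pose proof (tri a1 a3 a2); pose proof (tri a1 a2 a3).
  rewrite (sym a2 a1) in *; rewrite (sym a3 a2) in *.
  apply eucl_triangle_exists; try apply d_ge0; lra.
Qed.

Lemma geodesic_dist_start x y g t : geodesic d x y g -> 0 <= t <= 1 ->
  d x (g t) = t * d x y.
Proof.
  intros (g0 & _ & gd) ht; rewrite <- g0 at 1.
  rewrite gd, Rabs_left1 by lra; ring.
Qed.

Lemma geodesic_dist_end x y g t : geodesic d x y g -> 0 <= t <= 1 ->
  d (g t) y = (1 - t) * d x y.
Proof.
  intros (_ & g1 & gd) ht; rewrite <- g1 at 1.
  rewrite gd, Rabs_left1 by lra; ring.
Qed.

(* Convexity of [s |-> d (g s) (g' s)] between [s = 0], where both geodesics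
   sit at [m], and [s = 1]. *)
Lemma busemann_contract m a a' g g' t : busemann d ->
  geodesic d m a g -> geodesic d m a' g' -> 0 <= t <= 1 ->
  d (g t) (g' t) <= t * d a a'.
Proof.
  intros bus G G' ht.
  pose proof (bus m a m a' g g' G G' 0 1 t ltac:(lra) ltac:(lra) ht) as B.
  replace ((1 - t) * 0 + t * 1) with t in B by ring.
  destruct G as (g0 & g1 & _), G' as (g0' & g1' & _), metric as (_ & zero & _).
  rewrite g0, g1, g0', g1', (proj2 (zero m m) eq_refl) in B; lra.
Qed.

Lemma CAT0_triangle_of_contraction a1 a2 a3 p1 p2 p3 t :
  0 < t -> CAT0_triangle d p1 p2 p3 ->
  d p1 p2 <= t * d a1 a2 -> d p1 p3 <= t * d a1 a3 -> d p2 p3 <= t * d a2 a3 ->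
  d p1 a1 <= (1 - t) * circumradius d a1 a2 a3 ->
  d p2 a2 <= (1 - t) * circumradius d a1 a2 a3 ->
  d p3 a3 <= (1 - t) * circumradius d a1 a2 a3 ->
  CAT0_triangle d a1 a2 a3.
Proof.
  intros t_pos cat_p s12 s13 s23 h1 h2 h3 b1 b2 b3 (eb12 & eb13 & eb23).
  pose proof metric as (d_ge0 & _ & _ & tri).
  pose proof (circumradius_le_add d d_ge0 tri a1 a2 a3 p1 p2 p3 _ h1 h2 h3).
  destruct (comparison_triangle_exists p1 p2 p3) as (c1 & c2 & c3 & hc).
  pose proof (cat_p c1 c2 c3 hc).
  destruct hc as (ec12 & ec13 & ec23).
  assert (circumradius_R2 c1 c2 c3 <= t * circumradius_R2 b1 b2 b3).
  { apply circumradius_R2_scale; [lra | rewrite ec12, eb12 | rewrite ec13, eb13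
    | rewrite ec23, eb23]; assumption. }
  apply (Rmult_le_reg_l t); lra.
Qed.

End MetricSpace.

Theorem mainTheorem5 (T : Type) (d : T -> T -> R) :
  is_metric d -> geodesic_space d -> curv_loc_nonpos d ->
  circumradius_attained d -> busemann d -> curv_nonpos d.
Proof.
  intros metric geo loc att bus a1 a2 a3.
  destruct (att a1 a2 a3) as [m hm].
  set (r := circumradius d a1 a2 a3) in *.
  assert (r1 : d m a1 <= r) by (rewrite <- hm; apply max3_l).
  assert (r2 : d m a2 <= r) by (rewrite <- hm; apply max3_m).
  assert (r3 : d m a3 <= r) by (rewrite <- hm; apply max3_r).
  assert (r_ge0 : 0 <= r) by (destruct metric as (d_ge0 & _); pose proof (d_ge0 m a1); lra).
  destruct (loc m) as (U & (e & e_pos & ball_U) & cat_U).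
  set (t := e / (e + r)).
  assert (t_pos : 0 < t) by (apply Rdiv_lt_0_compat; lra).
  assert (t_eq : t * (e + r) = e) by (unfold t; field; lra).
  assert (t_le1 : t <= 1) by nra.
  assert (tr_lt_e : t * r < e) by nra.
  assert (in_U : forall a g, geodesic d m a g -> d m a <= r -> U (g t)).
  { intros a g G ha; apply ball_U; change (d m (g t) < e).
    rewrite (geodesic_dist_start d m a g t G) by lra; nra. }
  assert (near_a : forall a g, geodesic d m a g -> d m a <= r -> d (g t) a <= (1 - t) * r).
  { intros a g G ha; rewrite (geodesic_dist_end d m a g t G) by lra; nra. }
  destruct (geo m a1) as [g1 G1], (geo m a2) as [g2 G2], (geo m a3) as [g3 G3].
  apply (CAT0_triangle_of_contraction d metric a1 a2 a3 (g1 t) (g2 t) (g3 t) t t_pos).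
  { apply cat_U; [apply (in_U a1) | apply (in_U a2) | apply (in_U a3)]; assumption. }
  1-3: apply (busemann_contract d metric m); auto; lra.
  all: eapply near_a; eassumption.
Qed.
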